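(* Let $m,n\ge0$, $\phi=w_m^+$ and $\tau=w_n^-$. Then the minimal element (in Bruhat order) of $W_{\Lambda_1}\,I(\tau^{-1})\,\phi\,W_{\Lambda_0}$ is $w_\ell^+$, where $\ell=\max(0,m-n)$ if $m\equiv n\pmod 2$, and $\ell=\max(0,m-n-1)$ if $m\not\equiv n\pmod 2$.
   Context: $W$ is the Weyl group of the affine Kac–Moody algebra $\widehat{\mathfrak{sl}_2}$, generated by the simple reflections $s_0,s_1$; $W_{\Lambda_0}$ and $W_{\Lambda_1}$ are the stabilizers of the fundamental weights $\Lambda_0,\Lambda_1$ (generated by $s_1$, resp. $s_0$). For $k\ge0$, $w_k^+$ (resp. $w_k^-$) is the alternating product of $k$ simple reflections ending on the right with $s_0$ (resp. $s_1$), e.g. $w_3^+=s_0s_1s_0$; $w_0^\pm=1$. For $x\in W$, $I(x)=\{\sigma\in W:\sigma\le x\}$ is the Bruhat ideal generated by $x$, and for $y\in W$, $I(x)y=\{\sigma y:\sigma\in I(x)\}$. *)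

(* Concrete model of the affine Weyl group W of affine sl_2,
   i.e. the infinite dihedral Coxeter group <s0, s1 | s0^2 = s1^2 = 1>
   (no braid relation since m(s0,s1) = infinity).
   An element is represented by its (unique) reduced word: a sequence of
   letters (false = s_0, true = s_1) with no two equal adjacent letters. *)
From mathcomp Require Import all_boot.
Set Implicit Arguments. Unset Strict Implicit. Unset Printing Implicit Defensive.

Definition letter := bool.
Definition s0 : letter := false.
Definition s1 : letter := true.

Definition reduced (w : seq letter) : bool := sorted (fun a b => a != b) w.

(* free reduction (cancel s_i s_i = 1); stack kept in reversed order *)
Definition push (st : seq letter) (x : letter) : seq letter :=
  match st with
  | y :: t => if y == x then t else x :: st
  | [::] => [:: x]
  end.
Definition red (s : seq letter) : seq letter := rev (foldl push [::] s).

Definition mulW (u v : seq letter) : seq letter := red (u ++ v).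
Definition invW (w : seq letter) : seq letter := rev w.

(* Bruhat order, via the subword property (reduced words are unique here) *)
Definition bruhat (u v : seq letter) : Prop := subseq u v.

Definition Ideal (x : seq letter) (s : seq letter) : Prop :=
  reduced s /\ bruhat s x.

Definition parab (i : letter) (w : seq letter) : Prop :=
  exists s : seq letter, all (fun x => x == i) s /\ w = red s.

Definition WLam0 := parab s1.
Definition WLam1 := parab s0.

(* w_k^+ : alternating product of k simple reflections ending with s_0;
   w_k^- : ending with s_1 *)
Definition w_plus (k : nat) : seq letter := mkseq (fun i => odd (k.-1 - i)) k.
Definition w_minus (k : nat) : seq letter := mkseq (fun i => ~~ odd (k.-1 - i)) k.

Definition dset (tau phi : seq letter) (x : seq letter) : Prop :=
  exists u sigma v, WLam1 u /\ Ideal (invW tau) sigma /\ WLam0 v /\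
    x = mulW (mulW (mulW u sigma) phi) v.

Definition bruhat_min (S : seq letter -> Prop) (x : seq letter) : Prop :=
  S x /\ forall y, S y -> bruhat x y.

(* W acts on Z by s0 : x |-> -1 - x and s1 : x |-> 1 - x, the reflections in the
   walls of the alcove around 0; w |-> w.0 maps reduced words bijectively onto Z,
   with |w.0| = l(w).  In the infinite dihedral group u <= v in Bruhat order iff
   u = v or l(u) < l(v), so the minimum is the element w of the set with the
   smallest |w.0|.  The set consists of the u sigma phi v with u in {1, s0},
   v in {1, s1}, and sigma either of length < n or equal to
   tau^-1 = s1 s0 s1 ... (n letters); a parity count shows |u sigma phi v . 0| > l
   unless u sigma phi v . 0 = l, where l = max(0, m - n - [m + n odd]) is even. *)
From Stdlib Require Import ZArith Lia.
From mathcomp Require Import all_boot zify.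
Set Implicit Arguments. Unset Strict Implicit.

Local Open Scope Z_scope.
Local Arguments Z.add : simpl never.
Local Arguments Z.sub : simpl never.
Local Arguments Z.opp : simpl never.

Definition act (a : letter) (x : Z) : Z := if a then 1 - x else -1 - x.
Definition wact (w : seq letter) (x : Z) : Z := foldr act x w.
Definition code (w : seq letter) : Z := wact w 0.
Definition signed (k : nat) (x : Z) : Z := if odd k then - x else x.

Fixpoint alt (b : letter) (k : nat) : seq letter :=
  if k is k'.+1 then b :: alt (~~ b) k' else [::].

Definition ell (m n : nat) : nat := (if ~~ odd (m + n) then m - n else m - n.+1)%N.

Lemma actK a : involutive (act a).
Proof. by rewrite /act => x; case: a; lia. Qed.

Lemma wact_cat s t x : wact (s ++ t) x = wact s (wact t x).
Proof. exact: foldr_cat. Qed.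

Lemma wact_affine w x : wact w x = code w + signed (size w) x.
Proof.
rewrite /code /signed; elim: w => [|a w IH] /=; first by lia.
by rewrite IH /act; case: a; case: odd => /=; lia.
Qed.

Lemma wact_push st a x :
  wact (rev (push st a)) x = wact (rcons (rev st) a) x.
Proof.
case: st => [|b t] //=; case: eqP => [<-|_]; last by rewrite rev_cons.
by rewrite rev_cons -!cats1 -catA !wact_cat /= actK.
Qed.

Lemma wact_red s x : wact (red s) x = wact s x.
Proof.
suff wact_foldl st : wact (rev (foldl push st s)) x = wact (rev st ++ s) x.
  exact: wact_foldl [::].
elim: s st => [|a s IH] st /=; first by rewrite cats0.
by rewrite IH wact_cat wact_push -wact_cat cat_rcons.
Qed.

Lemma wact_mulW a b x : wact (mulW a b) x = wact a (wact b x).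
Proof. by rewrite wact_red wact_cat. Qed.

Lemma reduced_red s : reduced (red s).
Proof.
rewrite /reduced /red rev_sorted.
have : sorted (fun a b : letter => b != a) [::] by [].
elim: s [::] => [|a s IH] st // st_sorted /=; apply: IH.
case: st st_sorted => [|b t] //=; case: eqP => [->|ne] h; first exact: path_sorted h.
by rewrite /= h andbT; apply/eqP => e; apply: ne.
Qed.

Lemma code_mulW3 u s p v :
  code (mulW (mulW (mulW u s) p) v) = code (u ++ s ++ p ++ v).
Proof. by rewrite /code !wact_mulW !wact_cat. Qed.

Lemma reduced_alt b k : reduced (alt b k).
Proof.
elim: k b => [|k IH] b //; move: (IH (~~ b)); case: k {IH} => [|k] //=.
by rewrite /reduced /= => ->; rewrite andbT; case: b.
Qed.

Lemma size_alt b k : size (alt b k) = k.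
Proof. by elim: k b => [|k IH] b //=; rewrite IH. Qed.

Lemma code_alt b k : code (alt b k) = if b then Z.of_nat k else - Z.of_nat k.
Proof.
elim: k b => [|k IH] b; first by case: b.
by rewrite /code /= -/(code _) IH /act; case: b => /=; lia.
Qed.

Lemma alt_rcons b k : alt b k.+1 = rcons (alt b k) (b (+) odd k).
Proof.
elim: k b => [|k IH] b; first by case: b.
by rewrite -[alt b k.+2]/(b :: alt (~~ b) k.+1) IH /=; case: b; case: odd.
Qed.

Lemma reduced_altE w : reduced w -> w = alt (head s1 w) (size w).
Proof.
elim: w => [|a [|c w] IH] // h; rewrite {1}IH /=; last exact: path_sorted h.
by case/andP: h; case: a; case: c {IH}.
Qed.

Lemma abs_code w : reduced w -> Z.abs (code w) = Z.of_nat (size w).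
Proof. by move/reduced_altE => ->; rewrite code_alt size_alt; case: head; lia. Qed.

Lemma code_inj u w : reduced u -> reduced w -> code u = code w -> u = w.
Proof.
move=> ru rw e; have ek : size u = size w by apply/Nat2Z.inj; rewrite -!abs_code // e.
move: e; rewrite (reduced_altE ru) (reduced_altE rw) ek !code_alt.
by case: (size w) => [|k] //; case: head; case: head => //; lia.
Qed.

Lemma take_alt b k k' : (k <= k')%N -> take k (alt b k') = alt b k.
Proof. by elim: k' b k => [|k' IH] b [|k] //= le_kk'; rewrite IH. Qed.

Lemma subseq_alt b b' k k' : (k < k')%N -> subseq (alt b k) (alt b' k').
Proof.
case: k' => // k' lt_kk'; have le_kk' : (k <= k')%N := lt_kk'.
have [<- | ne] := eqVneq b b'; first by rewrite -(take_alt b (ltnW lt_kk')) take_subseq.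
have -> : b' = ~~ b by case: b b' ne => [] [].
rewrite [alt (~~ b) _]/= negbK; apply: subseq_trans (subseq_cons _ (~~ b)).
by rewrite -(take_alt b le_kk') take_subseq.
Qed.

Lemma bruhat_reducedP u w : reduced u -> reduced w ->
  bruhat u w <-> u = w \/ (size u < size w)%N.
Proof.
move=> ru rw; split=> [sub | [-> | lt]].
- have [le eq_size] := size_subseq_leqif sub.
  by case: ltngtP le eq_size => [_ _ _ | // | _ _ /esym/eqP]; [right | left].
- exact: subseq_refl.
- by rewrite (reduced_altE ru) (reduced_altE rw); apply: subseq_alt.
Qed.

Lemma red_nseq i k : red (nseq k i) = nseq (odd k) i.
Proof.
have push_nseq (b : bool) : push (nseq b i) i = nseq (~~ b) i by case: b => /=; rewrite ?eqxx.
suff foldl_nseq (b : bool) : foldl push (nseq b i) (nseq k i) = nseq (b (+) odd k) i.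
  by rewrite /red -[[::]]/(nseq false i) foldl_nseq; case: odd.
by elim: k b => [|k IH] b /=; rewrite ?addbF // push_nseq IH addNb addbN.
Qed.

Lemma parab_nseq i (b : bool) : parab i (nseq b i).
Proof. by exists (nseq b i); rewrite all_pred1_nseq red_nseq; case: b. Qed.

Lemma parabE i w : parab i w -> exists b : bool, w = nseq b i.
Proof. by case=> s [/all_pred1P -> ->]; rewrite red_nseq; exists (odd (size s)). Qed.

Lemma w_plusE m : w_plus m = alt (~~ odd m) m.
Proof.
elim: m => [|m IH] //; rewrite -[w_plus _]/(mkseq _ m.+1) /mkseq /= subn0 /= negbK.
congr (_ :: _); rewrite -IH -[1%N]addn0 iotaDl -map_comp.
by apply: eq_map => i /=; congr odd; lia.
Qed.

Lemma reduced_w_plus m : reduced (w_plus m).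
Proof. by rewrite w_plusE reduced_alt. Qed.

Lemma rev_w_minus n : rev (w_minus n) = alt true n.
Proof.
elim: n => [|n IH] //; rewrite alt_rcons -IH -rev_cons /w_minus /mkseq /= subn0.
congr (rev (_ :: _)); rewrite -[1%N]addn0 iotaDl -map_comp.
by apply: eq_map => i /=; congr (~~ odd _); lia.
Qed.

Lemma ideal_rev_w_minusP n s : Ideal (invW (w_minus n)) s <->
  exists b k, s = alt b k /\ ((k < n)%N \/ k = n /\ b).
Proof.
rewrite /Ideal /invW rev_w_minus; split=> [[rs] | [b [k [-> hk]]]].
- case/(bruhat_reducedP rs (reduced_alt true n)) => [-> | lt].
    by exists true, n; split=> //; right.
  exists (head s1 s), (size s); split; first exact: reduced_altE.
  by left; rewrite -(size_alt true n).
- split; first exact: reduced_alt.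
  by case: hk => [lt | [-> ->]]; [apply: subseq_alt | apply: subseq_refl].
Qed.

Lemma bruhat_min_code (S : seq letter -> Prop) x :
  reduced x -> S x ->
  (forall y, S y -> reduced y /\ (code y = code x \/ Z.of_nat (size x) < Z.abs (code y))) ->
  bruhat_min S x.
Proof.
move=> rx Sx min_x; split=> // y /min_x [ry [e | lt]]; apply/bruhat_reducedP => //.
- by left; apply: code_inj.
- by right; move: lt; rewrite abs_code //; lia.
Qed.

Lemma code_dcosetE (bu b : bool) k m (bv : bool) :
  code (nseq bu s0 ++ alt b k ++ w_plus m ++ nseq bv s1) =
  let y := (if b then Z.of_nat k else - Z.of_nat k)
           + signed k (signed m (Z.of_nat m + (if bv then 1 else 0))) in
  if bu then -1 - y else y.
Proof.
rewrite /code !wact_cat w_plusE !wact_affine !code_alt !size_alt /signed.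
by case: bu; case: bv; case: b; case: (odd k); case: (odd m) => /=; lia.
Qed.

Lemma code_dcoset_bound m n (bu b : bool) k (bv : bool) : ((k < n)%N \/ k = n /\ b) ->
  let r := code (nseq bu s0 ++ alt b k ++ w_plus m ++ nseq bv s1) in
  r = Z.of_nat (ell m n) \/ Z.of_nat (ell m n) < Z.abs r.
Proof.
rewrite code_dcosetE /ell oddD /signed => hk.
move: (odd_double_half m) (odd_double_half n) (odd_double_half k).
by case: (odd m); case: (odd n); case: (odd k); case: bu; case: bv; case: b hk => /=; lia.
Qed.

(* v = 1 and: sigma = phi^-1 if m < n; otherwise u = s0 and sigma = tau^-1
   (m + n odd) or tau^-1 without its last letter (m + n even, n > 0); for n = 0,
   sigma = 1 and u = s0 iff m is odd. *)
Lemma code_dcoset_ell m n : exists (bu b : bool) k, ((k < n)%N \/ k = n /\ b) /\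
  code (nseq bu s0 ++ alt b k ++ w_plus m ++ nseq false s1) = Z.of_nat (ell m n).
Proof.
have [lt_mn | le_nm] := ltnP m n; last case: (boolP (odd (m + n))) => [odd_mn | even_mn].
- exists false, false, m; split; first by left.
  by rewrite code_dcosetE /ell /signed; case: (odd m); case: (odd (m + n)) => /=; lia.
- exists true, true, n; split; first by right.
  move: odd_mn (odd_double_half m) (odd_double_half n).
  rewrite code_dcosetE /ell oddD /signed.
  by case: (odd m); case: (odd n) => //= _; lia.
- case: n even_mn le_nm => [|n] even_mn le_nm.
    exists (odd m), true, 0%N; split; first by right.
    move: even_mn (odd_double_half m); rewrite code_dcosetE /ell addn0 /signed.
    by case: (odd m) => //= _; lia.
  exists true, true, n; split; first by left.
  move: even_mn (odd_double_half m) (odd_double_half n).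
  rewrite code_dcosetE /ell oddD /signed /=.
  by case: (odd m); case: (odd n) => //= _; lia.
Qed.

Lemma even_ell m n : ~~ odd (ell m n).
Proof.
move: (odd_double_half (ell m n)) (odd_double_half m) (odd_double_half n).
rewrite /ell oddD; case: (odd m); case: (odd n) => /=; case: odd => //=; lia.
Qed.

Local Close Scope Z_scope.

Theorem mainTheorem8 (m n : nat) :
  bruhat_min (dset (w_minus n) (w_plus m))
    (w_plus (if ~~ odd (m + n) then m - n else m - n.+1)).
Proof.
change (bruhat_min (dset (w_minus n) (w_plus m)) (w_plus (ell m n))).
have code_target : code (w_plus (ell m n)) = Z.of_nat (ell m n).
  by rewrite w_plusE code_alt even_ell.
apply: bruhat_min_code; first exact: reduced_w_plus.
- have [bu [b [k [hk code_ell]]]] := code_dcoset_ell m n.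
  exists (nseq bu s0), (alt b k), [::]; split; first exact: parab_nseq.
  split; first by apply/ideal_rev_w_minusP; exists b, k.
  split; first exact: (parab_nseq s1 false).
  apply: code_inj; [exact: reduced_w_plus | exact: reduced_red |].
  by rewrite code_mulW3 code_target -code_ell.
- move=> _ [u [s [v [/parabE [bu ->] [/ideal_rev_w_minusP [b [k [-> hk]]] [/parabE [bv ->] ->]]]]]].
  split; first exact: reduced_red.
  by rewrite code_mulW3 code_target size_mkseq; apply: code_dcoset_bound.
Qed.
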